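(* Let $A$ be a finite-dimensional unital algebra over a field of characteristic $0$, let $a\in\mathrm{LN_{alt}}(A)$, and let $L_a=(L_a)_s+(L_a)_n$ be the Jordan–Chevalley decomposition of $L_a$ in $\mathrm{End}(A)$ (semisimple plus nilpotent, commuting). Then there exist $a_s,a_n\in\mathrm{LN_{alt}}(A)$ such that $(L_a)_s=L_{a_s}$ and $(L_a)_n=L_{a_n}$.
   Context: Algebras are not necessarily associative; $(x,y,z)=(xy)z-x(yz)$ is the associator and $L_x$ is left multiplication by $x$. $\mathrm{LN_{alt}}(A)=\{a\in A:(a,x,y)=-(x,a,y)\ \forall x,y\in A\}$. *)

From HB Require Import structures.
From mathcomp Require Import all_boot all_order all_algebra all_field.
Set Implicit Arguments. Unset Strict Implicit. Unset Printing Implicit Defensive.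
Import GRing.Theory.
Local Open Scope ring_scope.

(* A finite-dimensional (not necessarily associative) algebra over F is
   modelled as the coordinate space 'rV[F]_n with a bilinear product mul. *)

Definition bilinear_mul (F : fieldType) (n : nat)
    (mul : 'rV[F]_n -> 'rV[F]_n -> 'rV[F]_n) : Prop :=
  (forall (c : F) x y z, mul (c *: x + y) z = c *: mul x z + mul y z) /\
  (forall (c : F) x y z, mul z (c *: x + y) = c *: mul z x + mul z y).

Definition unital_mul (F : fieldType) (n : nat)
    (mul : 'rV[F]_n -> 'rV[F]_n -> 'rV[F]_n) : Prop :=
  exists e, forall x, mul e x = x /\ mul x e = x.

Definition assoc (F : fieldType) (n : nat)
    (mul : 'rV[F]_n -> 'rV[F]_n -> 'rV[F]_n) x y z :=
  mul (mul x y) z - mul x (mul y z).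

Definition LN_alt (F : fieldType) (n : nat)
    (mul : 'rV[F]_n -> 'rV[F]_n -> 'rV[F]_n) (a : 'rV[F]_n) : Prop :=
  forall x y, assoc mul a x y = - assoc mul x a y.

(* matrix of left multiplication L_a (row-vector convention: x *m Lmx a = a x) *)
Definition Lmx (F : fieldType) (n : nat)
    (mul : 'rV[F]_n -> 'rV[F]_n -> 'rV[F]_n) (a : 'rV[F]_n) : 'M[F]_n :=
  lin1_mx (mul a).

Definition mx_semisimple (F : fieldType) (n : nat) (M : 'M[F]_n.+1) : Prop :=
  separable.separable_poly (mxminpoly M).

Definition mx_nilpotent (F : fieldType) (n : nat) (M : 'M[F]_n.+1) : Prop :=
  exists k : nat, M ^+ k = 0.

From HB Require Import structures.
From mathcomp Require Import all_boot all_order all_algebra all_field ring.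
From Stdlib Require Import Classical.
Set Implicit Arguments. Unset Strict Implicit. Unset Printing Implicit Defensive.
Import GRing.Theory.
Local Open Scope ring_scope.

(* For X : 'M_n let J_X be the Jordan multiplication Y |-> X Y + Y X, realised on
   [mxvec] as the matrix [lin_jprodmx X].  Then J_{L_a} = J_S + J_N, where J_S is
   semisimple (a sum of the commuting semisimple left and right multiplications by
   S), J_N is nilpotent and the two commute; Newton's iteration therefore writes
   J_S as a polynomial in J_{L_a}.  Since a is in LN_alt, J_{L_a} L_x = L_{ax+xa},
   so the space of left multiplications is J_{L_a}-stable, hence J_S-stable.
   Applied to L_1 = 1 this gives 2 S = L_y, so S = L_s; applied to L_x it gives
   J_S L_x = L_{sx+xs}, which says exactly that s is in LN_alt.  Finally LN_alt
   is a subspace and L_{a-s} = N. *)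

Lemma irreducible_factor (F : fieldType) (p : {poly F}) :
  (1 < size p)%N -> exists2 r, irreducible_poly r & r %| p.
Proof.
have [d] := ubnP (size p); elim: d p => // d IHd p ltpd p_gt1.
case: (classic (exists q : {poly F}, [/\ size q != 1, q %| p & ~~ (q %= p)]))
  => [[q [q_neq1 q_dvd_p q_neqp]] | no_factor]; last first.
  exists p => //; split => // q q_neq1 q_dvd_p.
  by apply/negPn/negP => q_neqp; apply: no_factor; exists q.
have p_neq0 : p != 0 by rewrite -size_poly_gt0 ltnW.
have q_gt1 : (1 < size q)%N.
  by rewrite ltn_neqAle eq_sym q_neq1 size_poly_gt0 (dvdpN0 q_dvd_p).
have ltqp : (size q < size p)%N.
  by rewrite ltn_neqAle dvdp_leq // andbT dvdp_size_eqp.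
have [r irr_r r_dvd_q] := IHd q (leq_trans ltqp ltpd) q_gt1.
by exists r; last exact: dvdp_trans q_dvd_p.
Qed.

Lemma splitting_extension (F : fieldType) (p : {poly F}) : p != 0 ->
  exists (L : fieldType) (f : {rmorphism F -> L}) (rs : seq L),
    map_poly f p %| \prod_(z <- rs) ('X - z%:P).
Proof.
have [d] := ubnP (size p); elim: d F p => // d IHd F p ltpd p_neq0.
have [p_le1 | p_gt1] := leqP (size p) 1.
  exists F, idfun, [::]; rewrite big_nil map_poly_id // dvdp1.
  by rewrite eqn_leq p_le1 size_poly_gt0.
have [r /irredp_FAdjoin[K _ [z rz _]] r_dvd_p] := irreducible_factor p_gt1.
have /factor_theorem[p1 Dp] : root (map_poly (in_alg K) p) z.
  by rewrite -(divpK r_dvd_p) rmorphM rootM rz orbT.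
have p1_neq0 : p1 != 0.
  apply: contra_neq p_neq0 => p1_0; apply/eqP.
  by rewrite -(map_poly_eq0 (in_alg K)) Dp p1_0 mul0r.
have ltp1d : (size p1 < d)%N.
  move: (size_map_poly (in_alg K) p); rewrite Dp size_Mmonic ?monicXsubC //.
  by rewrite size_XsubC addn2 => /= eq_size; rewrite -ltnS eq_size.
have [L [f [rs split_p1]]] := IHd K p1 ltp1d p1_neq0.
exists L, (f \o in_alg K), (f z :: rs).
rewrite map_poly_comp Dp rmorphM /= map_polyXsubC big_cons mulrC.
by rewrite dvdp_mul2l ?polyXsubC_eq0.
Qed.

Lemma mx_semisimple_root (F : fieldType) k (A : 'M[F]_k.+1) (g : {poly F}) :
  separable_poly g -> horner_mx A g = 0 -> mx_semisimple A.
Proof. by move=> sep_g /mxminpoly_min /dvdp_separable; apply. Qed.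

Section SplittingExtension.
Variables (F L : fieldType) (f : {rmorphism F -> L}) (k : nat).

Lemma diagonalizable_map_semisimple (A : 'M[F]_k.+1) (rs : seq L) :
  mx_semisimple A -> map_poly f (mxminpoly A) %| \prod_(z <- rs) ('X - z%:P) ->
  diagonalizable (map_mx f A).
Proof.
rewrite /mx_semisimple -(separable_map f) -mxminpoly_map => sepA /dvdp_prod_XsubC[m].
move=> eq_m; apply/diagonalizableP; exists (mask m rs); last by rewrite (eqp_dvdl _ eq_m).
by rewrite -separable_prod_XsubC -(eqp_separable eq_m).
Qed.

Lemma mx_semisimple_diagonalizable_map (A : 'M[F]_k.+1) :
  diagonalizable (map_mx f A) -> mx_semisimple A.
Proof.
move=> /diagonalizableP[rs uniq_rs dvd_rs].
rewrite /mx_semisimple -(separable_map f) -mxminpoly_map.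
by apply: dvdp_separable dvd_rs _; rewrite separable_prod_XsubC.
Qed.

End SplittingExtension.

Lemma diagonalizableD (F : fieldType) k (A B : 'M[F]_k) : comm_mx A B ->
  diagonalizable A -> diagonalizable B -> diagonalizable (A + B).
Proof.
move=> cAB dA dB; have [|P Punit /and3P[/is_diag_mxP dPA /is_diag_mxP dPB _]] :=
  (codiagonalizableP [:: A; B]).1.
  split=> [C D | C]; rewrite !inE; last by case/orP=> /eqP->.
  by do 2![case/orP=> /eqP->]; [exact: comm_mx_refl | | exact/comm_mx_sym |].
exists P => //; apply/is_diag_mxP => i j neq_ij.
by rewrite /similar_to /conjmx mulmxDr mulmxDl mxE dPA ?dPB ?addr0.
Qed.

Lemma mx_semisimpleD (F : fieldType) k (A B : 'M[F]_k.+1) : comm_mx A B ->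
  mx_semisimple A -> mx_semisimple B -> mx_semisimple (A + B).
Proof.
move=> cAB sA sB; have [L [f [rs split_AB]]] :=
  splitting_extension (mulf_neq0 (separable_poly_neq0 sA) (separable_poly_neq0 sB)).
have [dvdA dvdB] : map_poly f (mxminpoly A) %| \prod_(z <- rs) ('X - z%:P) /\
                   map_poly f (mxminpoly B) %| \prod_(z <- rs) ('X - z%:P).
  by split; apply: dvdp_trans split_AB; rewrite dvdp_map ?dvdp_mulIl ?dvdp_mulIr.
apply: (@mx_semisimple_diagonalizable_map _ _ f); rewrite map_mxD.
apply: diagonalizableD; last exact: diagonalizable_map_semisimple dvdB.
  by rewrite /comm_mx -!map_mxM cAB.
exact: diagonalizable_map_semisimple dvdA.
Qed.

Lemma mx_nilpotentD (F : fieldType) k (A B : 'M[F]_k.+1) : comm_mx A B ->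
  mx_nilpotent A -> mx_nilpotent B -> mx_nilpotent (A + B).
Proof.
move=> cAB [i Ai0] [j Bj0]; exists (i + j)%N.
rewrite exprDn_comm //; apply: big1 => -[l /=]; rewrite ltnS => le_l _.
have [le_jl | lt_lj] := leqP j l.
  by rewrite -(subnKC le_jl) exprD Bj0 mul0r mulr0 mul0rn.
have le_ir : (i <= i + j - l)%N.
  by rewrite leq_subRL // addnC leq_add2l ltnW.
by rewrite -(subnKC le_ir) exprD Ai0 !mul0r mul0rn.
Qed.

Lemma mulmx_vec_inj (F : fieldType) p q r (A B : 'M[F]_(p * q, r)) :
  (forall Z : 'M_(p, q), mxvec Z *m A = mxvec Z *m B) -> A = B.
Proof. by move=> eqAB; apply/eqP/mulmxP => u; rewrite -(vec_mxK u) eqAB. Qed.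

Section MultiplicationOperators.
Variables (F : fieldType) (m : nat).
Implicit Types X Y : 'M[F]_m.

Lemma lin_mulmxM X Y :
  lin_mulmx X *m lin_mulmx Y = lin_mulmx (Y *m X) :> 'M_(m * m).
Proof. by apply: mulmx_vec_inj => Z; rewrite mulmxA !mul_vec_lin /= mulmxA. Qed.

Lemma lin_mulmxrM X Y :
  lin_mulmxr X *m lin_mulmxr Y = lin_mulmxr (X *m Y) :> 'M_(m * m).
Proof. by apply: mulmx_vec_inj => Z; rewrite mulmxA !mul_vec_lin /= mulmxA. Qed.

Lemma comm_lin_mulmx_mulmxr X Y : comm_mx (lin_mulmx X : 'M_(m * m)) (lin_mulmxr Y).
Proof. by apply: mulmx_vec_inj => Z; rewrite !mulmxA !mul_vec_lin /= mulmxA. Qed.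

Lemma lin_mulmx_scalar (c : F) : lin_mulmx c%:M = c%:M :> 'M_(m * m).
Proof.
by apply: mulmx_vec_inj => Z; rewrite mul_vec_lin /= mul_scalar_mx mul_mx_scalar linearZ.
Qed.

Lemma lin_mulmxr_scalar (c : F) : lin_mulmxr c%:M = c%:M :> 'M_(m * m).
Proof.
by apply: mulmx_vec_inj => Z; rewrite mul_vec_lin /= mul_mx_scalar mul_mx_scalar linearZ.
Qed.

End MultiplicationOperators.

Section HornerMultiplicationOperators.
Variables (F : fieldType) (m : nat).
Implicit Types X : 'M[F]_m.+1.

Lemma horner_lin_mulmx X p :
  horner_mx (lin_mulmx X : 'M_(m.+1 * m.+1)) p
    = lin_mulmx (horner_mx X p) :> 'M_(m.+1 * m.+1).
Proof.
elim/poly_ind: p => [|p c IHp]; first by rewrite !rmorph0 linear0.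
rewrite !rmorphD !rmorphM /= !horner_mx_X !horner_mx_C IHp.
rewrite linearD /= lin_mulmx_scalar; congr (_ + _).
exact: etrans (lin_mulmxM _ _) (congr1 _ (comm_mx_horner p (comm_mx_refl X))).
Qed.

Lemma horner_lin_mulmxr X p :
  horner_mx (lin_mulmxr X : 'M_(m.+1 * m.+1)) p
    = lin_mulmxr (horner_mx X p) :> 'M_(m.+1 * m.+1).
Proof.
elim/poly_ind: p => [|p c IHp]; first by rewrite !rmorph0 linear0.
rewrite !rmorphD !rmorphM /= !horner_mx_X !horner_mx_C IHp.
by rewrite linearD /= lin_mulmxr_scalar; congr (_ + _); exact: lin_mulmxrM.
Qed.

End HornerMultiplicationOperators.

Definition lin_jprodmx (F : fieldType) m (X : 'M[F]_m) : 'M[F]_(m * m) :=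
  lin_mulmx X + lin_mulmxr X.

Section JordanProductOperator.
Variables (F : fieldType) (m : nat).
Implicit Types X Y : 'M[F]_m.+1.

Lemma mul_vec_lin_jprodmx X Y : mxvec Y *m lin_jprodmx X = mxvec (X *m Y + Y *m X).
Proof. by rewrite mulmxDr !mul_vec_lin linearD. Qed.

Lemma lin_jprodmxD X Y : lin_jprodmx (X + Y) = lin_jprodmx X + lin_jprodmx Y.
Proof. by rewrite /lin_jprodmx !linearD addrACA. Qed.

Lemma comm_lin_jprodmx X Y : comm_mx X Y -> comm_mx (lin_jprodmx X) (lin_jprodmx Y).
Proof.
move=> cXY; have cLL : comm_mx (lin_mulmx X : 'M_(m.+1 * m.+1)) (lin_mulmx Y).
  by rewrite /comm_mx !lin_mulmxM cXY.
have cRR : comm_mx (lin_mulmxr X : 'M_(m.+1 * m.+1)) (lin_mulmxr Y).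
  by rewrite /comm_mx !lin_mulmxrM cXY.
apply: comm_mxD; apply/comm_mx_sym/comm_mxD; apply/comm_mx_sym => //.
  exact/comm_mx_sym/comm_lin_mulmx_mulmxr.
exact: comm_lin_mulmx_mulmxr.
Qed.

Lemma mx_semisimple_lin_jprodmx X : mx_semisimple X -> mx_semisimple (lin_jprodmx X).
Proof.
move=> sX; apply: mx_semisimpleD; first exact: (comm_lin_mulmx_mulmxr X X).
  apply: (mx_semisimple_root (g := mxminpoly X)) => //.
  by rewrite horner_lin_mulmx mx_root_minpoly linear0.
apply: (mx_semisimple_root (g := mxminpoly X)) => //.
by rewrite horner_lin_mulmxr mx_root_minpoly linear0.
Qed.

Lemma mx_nilpotent_lin_jprodmx X : mx_nilpotent X -> mx_nilpotent (lin_jprodmx X).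
Proof.
move=> [i Xi0]; apply: mx_nilpotentD; first exact: (comm_lin_mulmx_mulmxr X X).
  exists i; have := horner_lin_mulmx X 'X^i.
  by rewrite !rmorphXn /= !horner_mx_X Xi0 linear0.
exists i; have := horner_lin_mulmxr X 'X^i.
by rewrite !rmorphXn /= !horner_mx_X Xi0 linear0.
Qed.

End JordanProductOperator.

Lemma horner_add_taylor (R : comNzRingType) (p : {poly R}) (a b : R) :
  exists r, p.[a + b] = p.[a] + p^`().[a] * b + b ^+ 2 * r.
Proof.
elim/poly_ind: p => [|p c [r IHp]]; first by exists 0; rewrite deriv0 !horner0; ring.
exists (p^`().[a] + r * (a + b)).
rewrite derivMXaddC !hornerE IHp; ring.
Qed.

Section NewtonStep.
Variables (R : comNzRingType) (g u v : {poly R}) (x : R).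
Hypothesis bezout_x : u.[x] * g.[x] + v.[x] * g^`().[x] = 1.

Lemma newton_step (q : {poly R}) (z e w r : R) :
  q.[z] = x + e * w + g.[x] * r ->
  exists w' r', (q - (v \Po q) * (g \Po q)).[z] = x + e ^+ 2 * w' + g.[x] * r'.
Proof.
set d := e * w + g.[x] * r; rewrite -[x + _ + _]addrA -/d => qz.
have [r1 g_taylor] := horner_add_taylor g x d.
have [r2 v_taylor] := horner_add_taylor v x d.
(* Expand v(x+d) g(x+d) to second order in d and use v(x) g'(x) = 1 - u(x) g(x):
   what remains is a multiple of d^2 = e^2 w^2 + g(x) (2 e w r + g(x) r^2). *)
set Q := v.[x] * r1 + (v^`()).[x] * (g^`()).[x] + (v^`()).[x] * d * r1 + r2 * g.[x]
  + d * r2 * (g^`()).[x] + d ^+ 2 * r1 * r2.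
exists (- w ^+ 2 * Q), (- (v.[x] - u.[x] * d + (v^`()).[x] * d)
  - (2%:R * e * w * r + g.[x] * r ^+ 2) * Q).
rewrite hornerD hornerN hornerM !horner_comp qz -addrA g_taylor v_taylor /Q /d.
have bez : v.[x] * g^`().[x] = 1 - u.[x] * g.[x] by rewrite -bezout_x; ring.
ring: bez.
Qed.

End NewtonStep.

Section BivariateEvaluation.
Variables (F : fieldType) (k : nat) (D E : 'M[F]_k.+1).
Hypothesis cE : commr_rmorph (horner_mx D) E.

Lemma horner_morph_lift (p : {poly F}) (z : {poly {poly F}}) :
  horner_morph cE p^:P^:P.[z] = horner_mx (horner_morph cE z) p.
Proof.
elim/poly_ind: p => [|p c IHp]; first by rewrite !map_poly0 horner0 !rmorph0.
rewrite !rmorphD !rmorphM /= !map_polyX !map_polyC hornerD hornerM hornerX hornerC.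
by rewrite rmorphD rmorphM /= IHp horner_mx_X !horner_mx_C horner_morphC /= horner_mx_C.
Qed.

End BivariateEvaluation.

Lemma horner_mx_semisimple_part (F : fieldType) k (D E : 'M[F]_k.+1) :
  comm_mx D E -> mx_semisimple D -> mx_nilpotent E -> exists q, horner_mx (D + E) q = D.
Proof.
rewrite /mx_semisimple unlock => cDE + [m Em0]; have := mx_root_minpoly D.
move: (mxminpoly D) => g gD0 /Bezout_eq1_coprimepP[[u v] /= bezout].
have cE : commr_rmorph (horner_mx D) E.
  by move=> p; apply/comm_mx_sym/comm_horner_mx.
have lift_Y (p : {poly F}) : p^:P^:P.['Y] = p%:P.
  by rewrite horner_map; congr _%:P; apply: comp_polyXr.
(* Newton's iteration runs in F[Y][X], with Y standing for D and X for E; the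
   error after j steps is a multiple of X^(2^j) modulo g(Y). *)
have approx j : exists (q : {poly F}) (w r : {poly {poly F}}),
    q^:P^:P.['Y + 'X] = 'Y + 'X ^+ (2 ^ j) * w + g%:P * r.
  elim: j => [|j [q [w [r qE]]]].
    by exists 'X, 1, 0; rewrite !map_polyX hornerX expn0 expr1 mulr1 mulr0 addr0.
  have bezout_Y : u^:P^:P.['Y] * g^:P^:P.['Y] + v^:P^:P.['Y] * (g^:P^:P)^`().['Y] = 1.
    by rewrite !deriv_map !lift_Y -!polyCM -polyCD bezout.
  rewrite -[g%:P]lift_Y in qE; have [w' [r' qE']] := newton_step bezout_Y qE.
  exists (q - (v \Po q) * (g \Po q)), w', r'.
  by rewrite expnSr exprM -[g%:P]lift_Y -qE' !rmorphB !rmorphM /= !map_comp_poly.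
have [q [w [r qE]]] := approx m.
exists q; have := congr1 (horner_morph cE) qE; rewrite horner_morph_lift.
rewrite !rmorphD !rmorphM rmorphXn /= horner_morphX !horner_morphC /= horner_mx_X.
rewrite gD0 mul0r addr0.
suff -> : E ^+ (2 ^ m) = 0 by rewrite mul0r addr0.
by rewrite -(subnKC (ltnW (ltn_expl m (ltnSn 1)))) exprD Em0 mul0r.
Qed.

Definition Lmx_space (F : fieldType) n (mul : 'rV[F]_n -> 'rV[F]_n -> 'rV[F]_n) :
  'M[F]_(n, n * n) := lin1_mx (mxvec \o Lmx mul).

Section NonassociativeAlgebra.
Variables (F : fieldType) (n : nat) (mul : 'rV[F]_n.+1 -> 'rV[F]_n.+1 -> 'rV[F]_n.+1).
Hypothesis mul_bilinear : bilinear_mul mul.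
Local Notation L := (Lmx mul).

Let lmul x : {linear 'rV[F]_n.+1 -> 'rV[F]_n.+1} :=
  HB.pack (mul x)
    (GRing.isLinear.Build F _ _ _ (mul x) (fun c u v => mul_bilinear.2 c u v x)).
Let rmul y : {linear 'rV[F]_n.+1 -> 'rV[F]_n.+1} :=
  HB.pack (mul^~ y)
    (GRing.isLinear.Build F _ _ _ (mul^~ y) (fun c u v => mul_bilinear.1 c u v y)).

Lemma mulmx_Lmx x u : u *m L x = mul x u.
Proof. exact: mul_rV_lin1 (lmul x) u. Qed.

Lemma mulBl y : {morph mul^~ y : u v / u - v}.
Proof. exact: raddfB (rmul y). Qed.

Lemma mulDl y : {morph mul^~ y : u v / u + v}.
Proof. exact: raddfD (rmul y). Qed.

Lemma mulBr x : {morph mul x : u v / u - v}.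
Proof. exact: raddfB (lmul x). Qed.

Lemma Lmx_is_linear : linear L.
Proof.
move=> c x y; apply/eqP/mulmxP => u.
by rewrite mulmxDr -scalemxAr !mulmx_Lmx; apply: (mul_bilinear.1).
Qed.

Let Lmx_lin : {linear 'rV[F]_n.+1 -> 'M[F]_n.+1} :=
  HB.pack L (GRing.isLinear.Build F _ _ _ L Lmx_is_linear).

Lemma LmxB : {morph L : x y / x - y}.
Proof. exact: raddfB Lmx_lin. Qed.

Lemma LmxZ c x : L (c *: x) = c *: L x.
Proof. exact: linearZZ Lmx_lin c x. Qed.

Lemma LN_altB a b : LN_alt mul a -> LN_alt mul b -> LN_alt mul (a - b).
Proof.
have subrACA (p q r s : 'rV[F]_n.+1) : (p - q) - (r - s) = (p - r) - (q - s).
  by rewrite !opprD !opprK addrACA.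
move=> Ha Hb x y; rewrite /assoc !(mulBl, mulBr) [LHS]subrACA [in RHS]subrACA.
by have := Ha x y; have := Hb x y; rewrite /assoc => -> ->; rewrite [RHS]opprD.
Qed.

Lemma LN_altP c : LN_alt mul c <->
  forall x, L (mul c x + mul x c) = L c *m L x + L x *m L c.
Proof.
have key x u : u *m (L c *m L x + L x *m L c) - u *m L (mul c x + mul x c)
    = - (assoc mul c x u + assoc mul x c u).
  rewrite mulmxDr !mulmxA !mulmx_Lmx mulDl /assoc [RHS]opprD !opprB opprD.
  by rewrite [mul x _ + _]addrC addrACA.
split=> [Hc x | HL x y].
  apply/eqP/mulmxP => u; apply/eqP; rewrite eq_sym -subr_eq0 key.
  by rewrite Hc addNr oppr0.
by have := key x y; rewrite -HL subrr => /esym/eqP; rewrite oppr_eq0 addr_eq0 => /eqP.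
Qed.

Lemma mxvec_Lmx_is_linear : linear (mxvec \o L).
Proof. by move=> c x y; rewrite /= Lmx_is_linear linearP. Qed.

Let Lvec_lin : {linear 'rV[F]_n.+1 -> 'rV[F]_(n.+1 * n.+1)} :=
  HB.pack (mxvec \o L) (GRing.isLinear.Build F _ _ _ (mxvec \o L) mxvec_Lmx_is_linear).

Lemma mulmx_Lmx_space x : x *m Lmx_space mul = mxvec (L x).
Proof. exact: mul_rV_lin1 Lvec_lin x. Qed.

Lemma Lmx_spaceP X : reflect (exists x, X = L x) (mxvec X <= Lmx_space mul)%MS.
Proof.
apply: (iffP submxP) => [[x] | [x ->]]; last by exists x; rewrite mulmx_Lmx_space.
by rewrite mulmx_Lmx_space => /(can_inj mxvecK) ->; exists x.
Qed.

Lemma stablemx_Lmx_space a :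
  LN_alt mul a -> stablemx (Lmx_space mul) (lin_jprodmx (L a)).
Proof.
move=> /LN_altP Ha; apply/row_subP => i.
rewrite row_mul rowE mulmx_Lmx_space mul_vec_lin_jprodmx -Ha.
by apply/Lmx_spaceP; eexists.
Qed.

Lemma stablemx_jprod_Lmx_LN_alt S : unital_mul mul -> 2%:R != 0 :> F ->
  stablemx (Lmx_space mul) (lin_jprodmx S) -> exists2 s, S = L s & LN_alt mul s.
Proof.
move=> [e unit_e] two_neq0 stab_S.
(* As L e = 1, the stable space contains J_S 1 = 2 S; multiplying J_S (L x) = L z
   on the left by e identifies z. *)
have jprod_Lmx X : (exists x, X = L x) -> exists z, S *m X + X *m S = L z.
  move=> /Lmx_spaceP /(submxMr (lin_jprodmx S)) /submx_trans /(_ stab_S).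
  by rewrite mul_vec_lin_jprodmx => /Lmx_spaceP.
have Le : L e = 1%:M by apply/eqP/mulmxP => u; rewrite mulmx_Lmx mulmx1 (unit_e u).1.
have [y Sy] : exists y, S + S = L y.
  by have [|y] := jprod_Lmx 1%:M; [exists e | rewrite mulmx1 mul1mx; exists y].
pose s := 2%:R^-1 *: y; have Ss : S = L s.
  by rewrite LmxZ -Sy -mulr2n -scaler_nat scalerA mulVf // scale1r.
exists s => //; apply/LN_altP => x; rewrite -Ss.
have [z Sz] := jprod_Lmx (L x) (ex_intro _ x erefl); rewrite Sz; congr L.
have := congr1 (mulmx e) Sz; rewrite mulmxDr !mulmxA Ss !mulmx_Lmx.
by rewrite !(unit_e _).2 addrC.
Qed.

End NonassociativeAlgebra.

Theorem lemma3p5 (F : fieldType) (n : nat)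
    (mul : 'rV[F]_n.+1 -> 'rV[F]_n.+1 -> 'rV[F]_n.+1)
    (char0 : [pchar F] =i pred0)
    (Hbil : bilinear_mul mul) (Hunit : unital_mul mul)
    (a : 'rV[F]_n.+1) (Ha : LN_alt mul a)
    (S N : 'M[F]_n.+1)
    (HJC : Lmx mul a = S + N) (HS : mx_semisimple S) (HN : mx_nilpotent N)
    (Hcomm : S *m N = N *m S) :
  exists as_ an : 'rV[F]_n.+1,
    [/\ LN_alt mul as_, LN_alt mul an, S = Lmx mul as_ & N = Lmx mul an].
Proof.
have [q Jq] : exists q, horner_mx (lin_jprodmx (Lmx mul a)) q = lin_jprodmx S.
  rewrite HJC lin_jprodmxD; apply: horner_mx_semisimple_part.
  - exact: comm_lin_jprodmx.
  - exact: mx_semisimple_lin_jprodmx.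
  - exact: mx_nilpotent_lin_jprodmx.
have stab_S : stablemx (Lmx_space mul) (lin_jprodmx S).
  by rewrite -Jq; apply/horner_mx_stable/stablemx_Lmx_space.
have two_neq0 : 2%:R != 0 :> F by rewrite ((pcharf0P F).1 char0 2).
have [s Ss LNs] := stablemx_jprod_Lmx_LN_alt Hbil Hunit two_neq0 stab_S.
exists s, (a - s); split => //; first exact: LN_altB.
by rewrite LmxB // -Ss HJC addrC addKr.
Qed.
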